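(* Let $R$ be a simple path in $T$ with consecutive vertices $r_1,\dots,r_m$, let $k$ be an integer with $2\le k\le m$, put $N=m-k+1$, and for $j=1,\dots,N$ let $P_j$ be the path $r_j,r_{j+1},\dots,r_{j+k-1}$. Assume all $P_j$ have the same length, i.e. $|P_j|=l$ for all $j$. Then the sequence $j\mapsto\overline{S}(P_j)$ is unimodal of ''increasing then decreasing'' type: there exists $j^*\in\{1,\dots,N\}$ such that $\overline{S}(P_1)\le\overline{S}(P_2)\le\dots\le\overline{S}(P_{j^*})$ and $\overline{S}(P_{j^*})\ge\overline{S}(P_{j^*+1})\ge\dots\ge\overline{S}(P_N)$.
   Context: Let $T=(V,E)$ be a finite tree with vertex set $V=\{v_1,\dots,v_n\}$ and positive edge lengths; $d(x,y)$ denotes the length of the unique path in $T$ between vertices $x,y$. Each vertex $v_i$ has a weight $w_i\ge 0$ with $w(T)=\sum_i w_i=1$. A path $P$ is the vertex sequence $p(1),\dots,p(k)$ of a simple path in $T$; $|P|=d(p(1),p(k))$. For $v\in V$, $p_P(v)$ denotes the unique vertex of $P$ closest to $v$. For a vertex $p$ of $P$, the branch $T_p$ (with respect to $P$) is the set of vertices $v$ with $p_P(v)=p$, and $w_{T_p}=\sum_{v_i\in T_p}w_i$. For a vertex $p$ of $P$ put $\overline{d}_P(p)=\sum_{j=1}^k w_{T_{p(j)}}\,d(p(j),p)$. Fix a speed $v_t>0$ and a constant $\overline{G}\ge0$. Define $\overline{T}_2(P)=\frac{1}{v_t}\sum_i w_i\,\overline{d}_P(p_P(v_i))$ and $\overline{S}(P)=\overline{T}_2(P)+\overline{G}$.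 *)

From HB Require Import structures.
From mathcomp Require Import all_boot all_order all_algebra.
Set Implicit Arguments. Unset Strict Implicit. Unset Printing Implicit Defensive.
Import Order.TTheory GRing.Theory Num.Theory.
Local Open Scope ring_scope.

Section TreeDefs.
Variables (V : finType) (R : realFieldType).

Definition is_tree (e : rel V) : Prop :=
  [/\ symmetric e, irreflexive e,
      (forall x y, connect e x y) &
      (forall x s, path e x s -> uniq (x :: s) -> (2 <= size s)%N ->
                   ~~ e (last x s) x)].

Definition edge_lengths (e : rel V) (len : V -> V -> R) : Prop :=
  (forall x y, len x y = len y x) /\ (forall x y, e x y -> 0 < len x y).

Definition walk_len (len : V -> V -> R) (x : V) (s : seq V) : R :=
  \sum_(t <- pairmap len x s) t.

Definition is_tree_dist (e : rel V) (len : V -> V -> R) (d : V -> V -> R) : Prop :=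
  forall x s, path e x s -> uniq (x :: s) -> d x (last x s) = walk_len len x s.

Definition is_path (e : rel V) (P : seq V) : Prop :=
  if P is x :: s then path e x s && uniq (x :: s) else False.

Definition plen (d : V -> V -> R) (P : seq V) : R :=
  if P is x :: s then d x (last x s) else 0.

Definition closest (d : V -> V -> R) (P : seq V) (v : V) : V :=
  foldl (fun b x => if d v x < d v b then x else b) (head v P) P.

Definition branch_w (d : V -> V -> R) (w : V -> R) (P : seq V) (p : V) : R :=
  \sum_(v | closest d P v == p) w v.

Definition dbar (d : V -> V -> R) (w : V -> R) (P : seq V) (p : V) : R :=
  \sum_(q <- P) branch_w d w P q * d q p.

Definition T2bar (d : V -> V -> R) (w : V -> R) (vt : R) (P : seq V) : R :=
  vt^-1 * \sum_(v : V) w v * dbar d w P (closest d P v).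

Definition Sbar (d : V -> V -> R) (w : V -> R) (vt G : R) (P : seq V) : R :=
  T2bar d w vt P + G.

End TreeDefs.

(* P_{j+1} (0-indexed j) : the window r_{j+1}, ..., r_{j+k} of R. *)
Definition window (T : Type) (Rs : seq T) (k j : nat) : seq T :=
  take k (drop j Rs).

From HB Require Import structures.
From mathcomp Require Import all_boot all_order all_algebra.
From mathcomp Require Import zify ring lra.
Set Implicit Arguments. Unset Strict Implicit. Unset Printing Implicit Defensive.
Import Order.TTheory GRing.Theory Num.Theory.
Local Open Scope ring_scope.

(* Measure positions along R by arc length x_i.  Every vertex v has a foot
   r_c(v) on R, a vertex of R nearest to v, and the tree path from v to any r_i
   runs through it, so d(v, r_i) = d(v, r_c(v)) + |x_i - x_c(v)|.  Hence the
   vertex of the window [a, b] nearest to v is r at the index c(v) clamped to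
   [a, b], and vt * (Sbar - G) is the weighted mean of |x_clamp(c u) - x_clamp(c v)|
   over pairs u, v.  Equal window lengths mean that sliding the window moves both
   of its ends by the same L >= 0, which changes that mean by
   2 L (beta - alpha) (1 - alpha - beta), where alpha is the weight with foot at
   or before the left end and beta the weight with foot past the right end.  The
   last factor is >= 0 and beta - alpha decreases as the window slides, so the
   increments change sign at most once, from + to -. *)

Lemma unimodal_of_nonincreasing_sign (R : realDomainType) (f s : nat -> R) N :
  (0 < N)%N -> (forall j, s j.+1 <= s j) ->
  (forall j, (j.+1 < N)%N -> 0 <= s j -> f j <= f j.+1) ->
  (forall j, (j.+1 < N)%N -> s j <= 0 -> f j.+1 <= f j) ->
  exists2 js, (js < N)%N &
    (forall j, (j.+1 <= js)%N -> f j <= f j.+1) /\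
    (forall j, (js <= j)%N -> (j.+1 < N)%N -> f j.+1 <= f j).
Proof.
move=> N_gt0 s_noninc f_up f_down.
pose js := find (fun j => s j < 0) (iota 0 N.-1).
have js_le : (js <= N.-1)%N by rewrite -[X in (_ <= X)%N](size_iota 0) find_size.
exists js; first lia.
split=> [j lt_j_js | j le_js_j lt_jN].
  apply: f_up; first lia.
  have := before_find 0%N lt_j_js; rewrite nth_iota; last by lia.
  by rewrite add0n => /negbT; rewrite -leNgt.
apply: f_down => //.
have has_neg : has (fun j => s j < 0) (iota 0 N.-1) by rewrite has_find size_iota; lia.
have := nth_find 0%N has_neg; rewrite -/js nth_iota ?add0n; last by lia.
have s_le n : s (js + n)%N <= s js.
  by elim: n => [|n IH]; rewrite ?addn0 // addnS (le_trans (s_noninc _)).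
by rewrite -(subnKC le_js_j) => /(le_lt_trans (s_le _)) /ltW.
Qed.

Section WeightedPairSum.
Variables (R : comPzRingType) (V : finType) (w : V -> R).
Hypothesis w_sum1 : \sum_v w v = 1.

(* For 0/1-valued X the summand is w v * w u times the indicator of X v != X u. *)
Lemma weighted_pair_sum (X : V -> R) :
  \sum_v \sum_u w v * w u * (X v + X u - 2 * X v * X u) =
  2 * (\sum_u w u * X u) * (1 - \sum_u w u * X u).
Proof.
set xi := \sum_u w u * X u.
have inner v : \sum_u w v * w u * (X v + X u - 2 * X v * X u) =
    w v * X v + w v * xi - 2 * (w v * X v) * xi.
  rewrite (eq_bigr (fun u => (w v * X v) * w u + w v * (w u * X u) -
      (2 * (w v * X v)) * (w u * X u))); last by move=> u _; ring.
  by rewrite sumrB big_split /= -!mulr_sumr w_sum1 /xi; ring.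
under eq_bigr => v _ do rewrite inner.
by rewrite !sumrB big_split /= -!mulr_suml -mulr_sumr -/xi w_sum1; ring.
Qed.

End WeightedPairSum.

Definition clamp (a b x : nat) : nat := maxn a (minn x b).

Section ClampedSpread.
Variables (R : realFieldType) (V : finType) (w : V -> R) (c : V -> nat)
  (x : nat -> R) (m : nat).
Hypothesis x_mono : forall i j, (i <= j)%N -> (j < m)%N -> x i <= x j.
Hypothesis w_ge0 : forall v, 0 <= w v.
Hypothesis w_sum1 : \sum_v w v = 1.

Definition clamped_spread (a b : nat) : R :=
  \sum_v \sum_u w v * w u * `|x (clamp a b (c v)) - x (clamp a b (c u))|.

Definition weight_le (a : nat) : R := \sum_u w u * (c u <= a)%N%:R.
Definition weight_gt (b : nat) : R := \sum_u w u * (b < c u)%N%:R.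

Lemma weight_leS a : weight_le a <= weight_le a.+1.
Proof. by apply: ler_sum => u _; rewrite ler_wpM2l // ler_nat; case: leqP; lia. Qed.

Lemma weight_gtS b : weight_gt b.+1 <= weight_gt b.
Proof. by apply: ler_sum => u _; rewrite ler_wpM2l // ler_nat; case: leqP; lia. Qed.

Lemma weight_le_gt_le1 a b : (a <= b)%N -> weight_le a + weight_gt b <= 1.
Proof.
move=> le_ab; rewrite -w_sum1 -big_split /=; apply: ler_sum => u _.
by rewrite -mulrDr ler_piMr // -natrD lern1; case: leqP; case: ltnP; lia.
Qed.

Variables (a b : nat) (L : R).
Hypotheses (lt_ab : (a < b)%N) (lt_b1m : (b.+1 < m)%N).
Hypotheses (x_stepa : x a.+1 = x a + L) (x_stepb : x b.+1 = x b + L).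

Lemma x_clamp_shift z : x (clamp a.+1 b.+1 z) =
  x (clamp a b z) + L * ((z <= a)%N%:R + (b < z)%N%:R).
Proof.
case: (leqP z a) => h1; case: (ltnP b z) => h2 /=; try lia.
- have -> : clamp a.+1 b.+1 z = a.+1 by rewrite /clamp; lia.
  have -> : clamp a b z = a by rewrite /clamp; lia.
  by rewrite x_stepa; ring.
- have -> : clamp a.+1 b.+1 z = b.+1 by rewrite /clamp; lia.
  have -> : clamp a b z = b by rewrite /clamp; lia.
  by rewrite x_stepb; ring.
- have -> : clamp a.+1 b.+1 z = clamp a b z by rewrite /clamp; lia.
  ring.
Qed.

Lemma clamped_gap_shift y z :
  `|x (clamp a.+1 b.+1 y) - x (clamp a.+1 b.+1 z)| -
  `|x (clamp a b y) - x (clamp a b z)| =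
  L * (((b < y)%N%:R + (b < z)%N%:R - 2 * (b < y)%N%:R * (b < z)%N%:R) -
       ((y <= a)%N%:R + (z <= a)%N%:R - 2 * (y <= a)%N%:R * (z <= a)%N%:R)).
Proof.
wlog le_yz : y z / (y <= z)%N => [wlog_le|].
  case: (leqP y z) => h; first exact: wlog_le.
  by rewrite distrC [X in _ - X]distrC wlog_le; [ring | exact: ltnW].
have x_clamp_mono a' b' : (a' <= b')%N -> (b' < m)%N ->
    x (clamp a' b' y) <= x (clamp a' b' z).
  by move=> ha hb; apply: x_mono; rewrite /clamp; lia.
rewrite distrC (distrC (x (clamp a b y))).
rewrite !ger0_norm ?subr_ge0 ?x_clamp_mono; try lia.
rewrite !x_clamp_shift.
case: (leqP y a) => h1; case: (ltnP b y) => h2; case: (leqP z a) => h3;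
  case: (ltnP b z) => h4 /=; try lia; ring.
Qed.

Lemma clamped_spread_shift :
  clamped_spread a.+1 b.+1 - clamped_spread a b =
  2 * L * (weight_gt b - weight_le a) * (1 - weight_le a - weight_gt b).
Proof.
have -> : 2 * L * (weight_gt b - weight_le a) * (1 - weight_le a - weight_gt b) =
  L * (2 * weight_gt b * (1 - weight_gt b) - 2 * weight_le a * (1 - weight_le a)) by ring.
rewrite /weight_le /weight_gt -!(weighted_pair_sum w_sum1) /clamped_spread -!sumrB mulr_sumr.
apply: eq_bigr => v _; rewrite -!sumrB mulr_sumr; apply: eq_bigr => u _.
by rewrite -mulrBr clamped_gap_shift; ring.
Qed.

End ClampedSpread.

Section TreeDistance.
Variables (R : realFieldType) (V : finType) (e : rel V) (len d : V -> V -> R).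
Hypothesis len_pos : forall x y, e x y -> 0 < len x y.
Hypothesis d_tree : is_tree_dist e len d.
Hypothesis e_conn : forall x y, connect e x y.

Lemma walk_len_nil x : walk_len len x [::] = 0.
Proof. by rewrite /walk_len big_nil. Qed.

Lemma walk_len_cons x y s : walk_len len x (y :: s) = len x y + walk_len len y s.
Proof. by rewrite /walk_len /= big_cons. Qed.

Lemma walk_len_cat x s1 s2 :
  walk_len len x (s1 ++ s2) = walk_len len x s1 + walk_len len (last x s1) s2.
Proof.
elim: s1 x => [|y s1 IH] x /=; first by rewrite walk_len_nil add0r.
by rewrite !walk_len_cons IH addrA.
Qed.

Lemma walk_len_ge0 x s : path e x s -> 0 <= walk_len len x s.
Proof.
elim: s x => [|y s IH] x /=; first by rewrite walk_len_nil.
by case/andP=> exy ps; rewrite walk_len_cons addr_ge0 ?IH // ltW ?len_pos.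
Qed.

Lemma walk_len_gt0 x y s : path e x (y :: s) -> 0 < walk_len len x (y :: s).
Proof.
by case/andP=> exy ps; rewrite walk_len_cons ltr_wpDr ?walk_len_ge0 ?len_pos.
Qed.

Lemma exists_simple_path x y :
  exists s, [/\ path e x s, uniq (x :: s) & last x s = y].
Proof.
case/connectP: (e_conn x y) => p p_path ->.
by case: (shortenP p_path) => p' p'_path p'_uniq _; exists p'.
Qed.

Lemma foldl_argmin (T : eqType) (f : T -> R) (s : seq T) b :
  let g := fun b y => if f y < f b then y else b in
  foldl g b s \in b :: s /\ forall y, y \in b :: s -> f (foldl g b s) <= f y.
Proof.
move=> g; elim: s b => [|y s IH] b /=.
  by split=> [|z]; rewrite ?mem_head // inE => /eqP->.
have [mem_g min_g] := IH (g b y); split.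
  by move: mem_g; rewrite /g; case: ifP => _; rewrite !inE => /orP[->|->];
    rewrite ?orbT.
have g_le : f (g b y) <= f b /\ f (g b y) <= f y.
  by rewrite /g; case: ltP => [/ltW|]; split.
move=> z; rewrite !inE => /orP[/eqP->|/orP[/eqP->|zs]].
- exact: le_trans (min_g _ (mem_head _ _)) g_le.1.
- exact: le_trans (min_g _ (mem_head _ _)) g_le.2.
- by apply: min_g; rewrite inE zs orbT.
Qed.

Lemma closest_min (P : seq V) v : P != [::] ->
  closest d P v \in P /\ forall y, y \in P -> d v (closest d P v) <= d v y.
Proof.
case: P => // y P _; have [mem_c min_c] := foldl_argmin (d v) (y :: P) y.
rewrite /closest; change (head v (y :: P)) with y.
split; first by move: mem_c; rewrite inE => /orP[/eqP->|]; rewrite ?mem_head.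
by move=> z zP; apply: min_c; rewrite inE zP orbT.
Qed.

Lemma dbar_closestE (w : V -> R) (P : seq V) p : uniq P -> P != [::] ->
  dbar d w P p = \sum_u w u * d (closest d P u) p.
Proof.
move=> P_uniq P_nil; rewrite /dbar /branch_w.
under eq_bigr => q _ do rewrite big_mkcond mulr_suml.
rewrite exchange_big /=; apply: eq_bigr => u _.
have [closest_in _] := closest_min u P_nil.
rewrite (bigD1_seq (closest d P u)) //= eqxx big1_seq ?addr0 //.
by move=> q /andP[q_neq _]; rewrite eq_sym (negbTE q_neq) mul0r.
Qed.

Lemma sum_w_dbar_closest (w : V -> R) (P : seq V) : uniq P -> P != [::] ->
  \sum_v w v * dbar d w P (closest d P v) =
  \sum_v \sum_u w v * w u * d (closest d P u) (closest d P v).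
Proof.
move=> P_uniq P_nil; apply: eq_bigr => v _.
by rewrite dbar_closestE // mulr_sumr; apply: eq_bigr => u _; rewrite mulrA.
Qed.

Fixpoint iota_down (a n : nat) : seq nat :=
  if n is n'.+1 then a.-1 :: iota_down a.-1 n' else [::].

Lemma mem_iota_down a n j : (n <= a)%N -> j \in iota_down a n -> (a - n <= j < a)%N.
Proof.
elim: n a => [//|n IH] a le_na /=; rewrite inE => /orP[/eqP->|/IH]; first lia.
by move=> H; have := H ltac:(lia); lia.
Qed.

Section AlongPath.
Hypothesis e_sym : symmetric e.
Hypothesis len_sym : forall x y, len x y = len y x.
Variables (x0 : V) (rs : seq V).
Hypotheses (R_path : path e x0 rs) (R_uniq : uniq (x0 :: rs)).
Local Notation Rs := (x0 :: rs).
Local Notation m := (size Rs).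
Definition node (i : nat) : V := nth x0 Rs i.
Arguments node : simpl never.

Definition arc (t : nat) : R := \sum_(i < t) len (node i) (node i.+1).

Lemma node_edge t : (t.+1 < m)%N -> e (node t) (node t.+1).
Proof. by move=> lt_tm; apply: (pathP x0 R_path). Qed.

Lemma node_inj i j : (i < m)%N -> (j < m)%N -> node i = node j -> i = j.
Proof. by move=> lt_im lt_jm /eqP; rewrite /node nth_uniq // => /eqP. Qed.

Lemma mem_node i : node i \in Rs.
Proof.
by rewrite /node; case: (ltnP i m) => [/mem_nth->|/(nth_default x0)->]; rewrite ?mem_head.
Qed.

Lemma arcS t : arc t.+1 = arc t + len (node t) (node t.+1).
Proof. by rewrite /arc big_ord_recr. Qed.

Lemma arc_lt i j : (i < j)%N -> (j < m)%N -> arc i < arc j.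
Proof.
elim: j => [//|j IH] lt_ij lt_jm; rewrite arcS.
have len_gt0 := len_pos (node_edge lt_jm).
move: lt_ij; rewrite ltnS leq_eqVlt => /orP[/eqP->|lt_ij]; first by rewrite ltrDl.
by apply: lt_trans (IH lt_ij (ltnW lt_jm)) _; rewrite ltrDl.
Qed.

Lemma arc_le i j : (i <= j)%N -> (j < m)%N -> arc i <= arc j.
Proof. by rewrite leq_eqVlt => /orP[/eqP->//|lt_ij lt_jm]; rewrite ltW ?arc_lt. Qed.

Lemma iota_up_spec a n : (a + n < m)%N ->
  [/\ path e (node a) (map node (iota a.+1 n)),
      uniq (node a :: map node (iota a.+1 n)),
      last (node a) (map node (iota a.+1 n)) = node (a + n) &
      walk_len len (node a) (map node (iota a.+1 n)) = arc (a + n) - arc a].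
Proof.
move=> lt_anm; split.
- elim: n a lt_anm => [//|n IH] a lt_anm /=.
  rewrite node_edge; last by lia.
  by apply: IH; lia.
- rewrite -[_ :: _]/(map node (iota a n.+1)) map_inj_in_uniq ?iota_uniq //.
  by move=> i j; rewrite !mem_iota => hi hj; apply: node_inj; lia.
- by elim: n a {lt_anm} => [|n IH] a /=; rewrite ?addn0 ?IH ?addSnnS.
- elim: n a {lt_anm} => [|n IH] a /=; first by rewrite walk_len_nil addn0 subrr.
  by rewrite walk_len_cons IH arcS addSnnS; ring.
Qed.

Lemma iota_down_spec a n : (n <= a)%N -> (a < m)%N ->
  [/\ path e (node a) (map node (iota_down a n)),
      uniq (node a :: map node (iota_down a n)),
      last (node a) (map node (iota_down a n)) = node (a - n) &
      walk_len len (node a) (map node (iota_down a n)) = arc a - arc (a - n)].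
Proof.
move=> le_na lt_am; split.
- elim: n a le_na lt_am => [//|n IH] a le_na lt_am /=.
  rewrite IH ?andbT; try lia.
  by rewrite e_sym (_ : a = a.-1.+1) ?node_edge; lia.
- rewrite -[_ :: _]/(map node (a :: iota_down a n)) map_inj_in_uniq.
    elim: n a le_na lt_am => [//|n IH] a le_na lt_am.
    rewrite [iota_down _ _]/= cons_uniq IH ?andbT; try lia; rewrite inE negb_or.
    apply/andP; split; first lia.
    by apply/negP => /mem_iota_down H; have := H ltac:(lia); lia.
  move=> i j; rewrite !inE => /orP[/eqP->|/mem_iota_down hi]
    /orP[/eqP->|/mem_iota_down hj]; apply: node_inj => //;
    try (by have := hi le_na; lia); by have := hj le_na; lia.
- elim: n a le_na {lt_am} => [|n IH] a le_na /=; first by rewrite subn0.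
  by rewrite IH; [congr node; lia | lia].
- elim: n a le_na {lt_am} => [|n IH] a le_na /=; first by rewrite walk_len_nil subn0 subrr.
  rewrite walk_len_cons IH; last by lia.
  have a_eq : a = a.-1.+1 by lia.
  rewrite [in arc a]a_eq arcS -a_eq len_sym.
  by rewrite (_ : (a - n.+1 = a.-1 - n)%N); [ring | lia].
Qed.

Definition segment (i j : nat) : seq V :=
  if (i <= j)%N then map node (iota i.+1 (j - i)) else map node (iota_down i (i - j)).

Lemma segment_spec i j : (i < m)%N -> (j < m)%N ->
  [/\ path e (node i) (segment i j), uniq (node i :: segment i j),
      last (node i) (segment i j) = node j &
      walk_len len (node i) (segment i j) = `|arc j - arc i|].
Proof.
move=> lt_im lt_jm; rewrite /segment; case: (leqP i j) => [le_ij | lt_ji].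
  have := @iota_up_spec i (j - i).
  by rewrite subnKC // ger0_norm ?subr_ge0 ?arc_le //; apply.
have le_ji := ltnW lt_ji; have := @iota_down_spec i (i - j).
rewrite subKn // ler0_norm ?opprB ?subr_le0 ?arc_le //.
by apply; rewrite ?leq_subr.
Qed.

Lemma dist_node i j : (i < m)%N -> (j < m)%N -> d (node i) (node j) = `|arc j - arc i|.
Proof.
move=> lt_im lt_jm; have [seg_path seg_uniq seg_last seg_len] := segment_spec lt_im lt_jm.
by rewrite -seg_last d_tree.
Qed.

Lemma segment_subset i j : {subset segment i j <= Rs}.
Proof. by rewrite /segment => y; case: ifP => _ /mapP[k _ ->]; apply: mem_node. Qed.

Definition foot (v : V) : nat :=
  Order.arg_min (ord0 : 'I_m) xpredT (fun i => d v (node i)).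

Lemma foot_lt v : (foot v < m)%N.
Proof. exact: ltn_ord. Qed.

Lemma foot_min v i : (i < m)%N -> d v (node (foot v)) <= d v (node i).
Proof.
move=> lt_im; rewrite /foot; case: arg_minP => // c _ c_min.
exact: (c_min (Ordinal lt_im)).
Qed.

(* A vertex of R met strictly before the end of the path would be strictly nearer
   to v than the foot. *)
Lemma path_to_foot_avoids_path v s y :
  path e v s -> uniq (v :: s) -> last v s = node (foot v) ->
  y \in v :: s -> y \in Rs -> y = node (foot v).
Proof.
move=> s_path s_uniq s_last y_s y_R.
have [j lt_jm y_eq] : exists2 j, (j < m)%N & y = node j.
  by exists (index y Rs); rewrite ?index_mem /node ?nth_index.
move: s_path s_uniq s_last; case/splitPl: y_s => s1 [|z s2] s1_last;
  first by rewrite cats0 => _ _ <-.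
move=> s_path s_uniq s_last.
move: (s_path); rewrite cat_path => /andP[s1_path s2_path].
have s1_uniq : uniq (v :: s1) by move: s_uniq; rewrite -cat_cons cat_uniq => /andP[].
have := foot_min v lt_jm; rewrite -s_last (d_tree s_path s_uniq) -y_eq -s1_last.
by rewrite (d_tree s1_path s1_uniq) walk_len_cat gerDl leNgt walk_len_gt0.
Qed.

(* The simple path from v to its foot followed by the segment of R from the foot
   to node i is again simple, hence it is the tree path from v to node i. *)
Lemma foot_dist v i : (i < m)%N ->
  d v (node i) = d v (node (foot v)) + `|arc i - arc (foot v)|.
Proof.
move=> lt_im; have [s [s_path s_uniq s_last]] := exists_simple_path v (node (foot v)).
have [seg_path seg_uniq seg_last seg_len] := segment_spec (foot_lt v) lt_im.
have vs_seg_path : path e v (s ++ segment (foot v) i) by rewrite cat_path s_path s_last.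
have vs_seg_uniq : uniq (v :: s ++ segment (foot v) i).
  move: seg_uniq; rewrite -cat_cons cat_uniq s_uniq cons_uniq => /andP[foot_seg ->].
  rewrite andbT; apply/hasPn => y y_seg; apply/negP => y_vs.
  have y_foot := path_to_foot_avoids_path s_path s_uniq s_last y_vs
    (segment_subset y_seg).
  by move: foot_seg; rewrite -y_foot y_seg.
have := d_tree vs_seg_path vs_seg_uniq.
rewrite last_cat s_last seg_last walk_len_cat s_last seg_len => ->.
by rewrite -(d_tree s_path s_uniq) s_last.
Qed.

Lemma window_iota j k : (j + k <= m)%N -> window Rs k j = map node (iota j k).
Proof.
move=> le_jkm; apply: (@eq_from_nth _ x0).
  by rewrite size_map size_iota /window size_takel // size_drop; lia.
move=> i; rewrite /window size_takel ?size_drop; last by lia.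
by move=> lt_ik; rewrite nth_take // nth_drop (nth_map 0%N) ?size_iota ?nth_iota.
Qed.

Lemma arc_gap_clamp_lt a b c i : (b < m)%N -> (c < m)%N -> (a <= i <= b)%N ->
  i != clamp a b c -> `|arc (clamp a b c) - arc c| < `|arc i - arc c|.
Proof.
move=> lt_bm lt_cm i_ab i_neq; set cl := clamp a b c.
have lt_clm : (cl < m)%N by rewrite /cl /clamp; lia.
have [[le_c_cl lt_cl_i] | [lt_i_cl le_cl_c]] :
    (c <= cl /\ cl < i)%N \/ (i < cl /\ cl <= c)%N.
  by move: i_neq; rewrite /cl /clamp; lia.
- by rewrite !ger0_norm ?subr_ge0 ?ltrD2r ?arc_lt ?arc_le //; lia.
- by rewrite !ler0_norm ?subr_le0 ?ltrN2 ?ltrD2r ?arc_lt ?arc_le //; lia.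
Qed.

Lemma closest_window j k v : (0 < k)%N -> (j + k <= m)%N ->
  closest d (map node (iota j k)) v = node (clamp j (j + k.-1) (foot v)).
Proof.
move=> k_gt0 le_jkm.
have [closest_in closest_le] := @closest_min (map node (iota j k)) v
  ltac:(by case: k k_gt0 {le_jkm}).
set cl := clamp j (j + k.-1) (foot v).
have cl_in : node cl \in map node (iota j k) by rewrite map_f // mem_iota /cl /clamp; lia.
have := closest_le _ cl_in; case/mapP: closest_in => i; rewrite mem_iota => i_jk ->.
have [-> // | i_neq] := eqVneq i cl.
have lt_im : (i < m)%N by lia.
have lt_clm : (cl < m)%N by rewrite /cl /clamp; lia.
rewrite (foot_dist v lt_im) (foot_dist v lt_clm) lerD2l leNgt.
by rewrite arc_gap_clamp_lt ?foot_lt //; lia.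
Qed.

Lemma plen_window j k : (0 < k)%N -> (j + k <= m)%N ->
  plen d (map node (iota j k)) = arc (j + k.-1) - arc j.
Proof.
case: k => [//|k] _ le_jkm /=.
have [_ _ -> _] := iota_up_spec (a := j) (n := k) ltac:(lia).
by rewrite dist_node ?ger0_norm ?subr_ge0 ?arc_le //; lia.
Qed.

Section Windows.
Variables (w : V -> R) (vt G : R) (k : nat) (l : R).
Hypotheses (w_ge0 : forall v, 0 <= w v) (w_sum1 : \sum_v w v = 1) (vt_gt0 : 0 < vt).
Hypotheses (k_ge2 : (2 <= k)%N) (k_le_m : (k <= m)%N).
Hypothesis P_len : forall j, (j < m - k + 1)%N -> plen d (window Rs k j) = l.

Lemma Sbar_window j : (j + k <= m)%N ->
  Sbar d w vt G (window Rs k j) = vt^-1 * clamped_spread w foot arc j (j + k.-1) + G.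
Proof.
move=> le_jkm; have k_gt0 : (0 < k)%N by lia.
have window_uniq : uniq (map node (iota j k)).
  rewrite map_inj_in_uniq ?iota_uniq // => i1 i2.
  by rewrite !mem_iota => ? ?; apply: node_inj; lia.
rewrite /Sbar /T2bar window_iota // sum_w_dbar_closest //; last by case: (k) k_gt0.
congr (_ * _ + _); apply: eq_bigr => v _; apply: eq_bigr => u _.
rewrite !closest_window // dist_node //; rewrite /clamp; lia.
Qed.

Lemma arc_window_shift j : (j.+1 + k <= m)%N ->
  arc (j + k.-1).+1 = arc (j + k.-1) + (arc j.+1 - arc j).
Proof.
move=> le_jkm; have := P_len (j := j) ltac:(lia); have := P_len (j := j.+1) ltac:(lia).
rewrite !window_iota ?plen_window; try lia.
by rewrite (_ : (j.+1 + k.-1 = (j + k.-1).+1)%N); [lra | lia].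
Qed.

Lemma Sbar_window_step j : (j.+1 + k <= m)%N ->
  Sbar d w vt G (window Rs k j.+1) - Sbar d w vt G (window Rs k j) =
  vt^-1 * (2 * (arc j.+1 - arc j) * (weight_gt w foot (j + k.-1) - weight_le w foot j) *
           (1 - weight_le w foot j - weight_gt w foot (j + k.-1))).
Proof.
move=> le_jkm; rewrite !Sbar_window; try lia.
rewrite (_ : (j.+1 + k.-1 = (j + k.-1).+1)%N); last by lia.
have shift := clamped_spread_shift foot arc_le w_sum1 (a := j) (b := j + k.-1)
  (L := arc j.+1 - arc j) ltac:(lia) ltac:(lia) ltac:(ring) (arc_window_shift le_jkm).
by rewrite -shift; ring.
Qed.

Lemma window_middle_weight_ge0 j :
  0 <= 1 - weight_le w foot j - weight_gt w foot (j + k.-1).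
Proof. by have := weight_le_gt_le1 foot w_ge0 w_sum1 (leq_addr (k.-1) j); lra. Qed.

Lemma Sbar_window_up j : (j.+1 + k <= m)%N ->
  0 <= weight_gt w foot (j + k.-1) - weight_le w foot j ->
  Sbar d w vt G (window Rs k j) <= Sbar d w vt G (window Rs k j.+1).
Proof.
move=> le_jkm sign_ge0; rewrite -subr_ge0 Sbar_window_step //.
have arc_step_ge0 : 0 <= arc j.+1 - arc j by rewrite subr_ge0 arc_le //; lia.
have middle_ge0 := window_middle_weight_ge0 j.
apply: mulr_ge0; first by rewrite invr_ge0 ltW.
by apply: mulr_ge0 => //; apply: mulr_ge0 => //; apply: mulr_ge0.
Qed.

Lemma Sbar_window_down j : (j.+1 + k <= m)%N ->
  weight_gt w foot (j + k.-1) - weight_le w foot j <= 0 ->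
  Sbar d w vt G (window Rs k j.+1) <= Sbar d w vt G (window Rs k j).
Proof.
move=> le_jkm sign_le0; rewrite -subr_ge0 -opprB Sbar_window_step // oppr_ge0.
have arc_step_ge0 : 0 <= arc j.+1 - arc j by rewrite subr_ge0 arc_le //; lia.
have middle_ge0 := window_middle_weight_ge0 j.
apply: mulr_ge0_le0; first by rewrite invr_ge0 ltW.
by apply: mulr_le0_ge0 => //; apply: mulr_ge0_le0 => //; apply: mulr_ge0.
Qed.

End Windows.
End AlongPath.
End TreeDistance.

Theorem lemma4 (R : realFieldType) (V : finType) (e : rel V)
    (len : V -> V -> R) (d : V -> V -> R) (w : V -> R) (vt G : R)
    (Rs : seq V) (k : nat) (l : R) :
  is_tree e -> edge_lengths e len -> is_tree_dist e len d ->
  (forall v, 0 <= w v) -> \sum_(v : V) w v = 1 ->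
  0 < vt -> 0 <= G ->
  is_path e Rs ->
  (2 <= k)%N -> (k <= size Rs)%N ->
  (forall j, (j < size Rs - k + 1)%N -> plen d (window Rs k j) = l) ->
  exists2 js : nat, (js < size Rs - k + 1)%N &
    (forall j, (j.+1 <= js)%N ->
       Sbar d w vt G (window Rs k j) <= Sbar d w vt G (window Rs k j.+1)) /\
    (forall j, (js <= j)%N -> (j.+1 < size Rs - k + 1)%N ->
       Sbar d w vt G (window Rs k j.+1) <= Sbar d w vt G (window Rs k j)).
Proof.
move=> [e_sym _ e_conn _] [len_sym len_pos] d_tree w_ge0 w_sum1 vt_gt0 _ Rs_path
  k_ge2 k_le_m P_len.
case: Rs Rs_path k_le_m P_len => [//|x0 rs] /andP[R_path R_uniq] k_le_m P_len.
have up := Sbar_window_up len_pos d_tree e_conn e_sym len_sym R_path R_uniq G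
  w_ge0 w_sum1 vt_gt0 k_ge2 k_le_m P_len.
have down := Sbar_window_down len_pos d_tree e_conn e_sym len_sym R_path R_uniq G
  w_ge0 w_sum1 vt_gt0 k_ge2 k_le_m P_len.
pose c := foot d x0 rs.
apply: (@unimodal_of_nonincreasing_sign _ _
  (fun j => weight_gt w c (j + k.-1) - weight_le w c j)); first lia.
- by move=> j; rewrite addSn lerB ?weight_gtS ?weight_leS.
- by move=> j lt_jN; apply: up; lia.
- by move=> j lt_jN; apply: down; lia.
Qed.
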